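(* The graph property $\mathsf{NON\text{-}3\text{-}COLORABLE}$ (the complement of $3\text{-}\mathsf{COLORABLE}$) does not belong to $\mathrm{NLP}$.
   Context: Graphs. All graphs are finite, nonempty, simple, undirected and connected, and labeled: a graph is a triple $G=(V(G),E(G),\lambda_G)$ with labeling $\lambda_G:V(G)\to\{0,1\}^*$. $\mathsf{GRAPH}$ is the set of all graphs. A graph property is a subset of $\mathsf{GRAPH}$ closed under label-preserving isomorphism. $N^G_r(u)$ denotes the subgraph of $G$ induced by the nodes at distance at most $r$ from $u$. $3\text{-}\mathsf{COLORABLE}$ is the set of graphs $G$ admitting $f:V(G)\to\{0,1,2\}$ with $f(u)\ne f(v)$ for every edge $\{u,v\}$ (labels irrelevant), and $\mathsf{NON\text{-}3\text{-}COLORABLE}=\mathsf{GRAPH}\setminus3\text{-}\mathsf{COLORABLE}$. Identifiers and certificates. An identifier assignment of $G$ is a map $\mathrm{id}:V(G)\to\{0,1\}^*$; it is $r$-locally unique if $\mathrm{id}(u)\neq\mathrm{id}(v)$ for all distinct nodes $u,v$ at distance at most $2r$. Identifiers are ordered lexicographically (a proper prefix is smaller). A certificate assignment is a map $\kappa:V(G)\to\{0,1\}^*$; for $r\in\mathbb N$ and $p:\mathbb N\to\mathbb N$ it is $(r,p)$-bounded (w.r.t. $(G,\mathrm{id})$) if $|\kappa(u)|\le p\big(\sum_{v\in N^G_r(u)}(1+|\lambda_G(v)|+|\mathrm{id}(v)|)\big)$ for every node $u$. Distributed Turing machines. Such a machine $M$ is a Turing machine with three one-way-infinite tapes (receiving,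 internal, sending) over the alphabet $\{\vdash,\square,\#,0,1\}$ (left-end marker, blank, separator, bits), with designated states start, pause, stop. It is executed on a graph $G$ under an (at least $1$-locally unique) identifier assignment $\mathrm{id}$ and a certificate assignment $\kappa$: every node runs its own copy of $M$ in synchronous rounds. In each round, a node $u$ whose neighbors are $v_1,\dots,v_d$ in increasing identifier order (i) gets $m_1\#\cdots\#m_d\#$ on its receiving tape, where $m_i$ is the message sent to it by $v_i$ in the previous round (empty in the first round); (ii) its sending tape is emptied, its internal tape is initialized to $\lambda_G(u)\#\mathrm{id}(u)\#\kappa(u)$ in the first round and otherwise keeps its content, and, unless $u$ reached stop in an earlier round, $M$ runs from state start with all heads leftmost until it enters pause or stop; (iii) $u$ sends to $v_i$ the $i$-th $\#$-separated bit string on its sending tape (the empty string if there is none). The execution terminates once all nodes are in stop; $G$ is accepted, written $M(G,\mathrm{id},\kappa)\equiv\mathrm{accept}$, if at that point every node has exactly the bit string $1$ on its internal tape (symbols other than $0,1$ ignored). A local-polynomial machine is a distributed Turing machine for which there are a constant $c$ and a polynomial $q$ such that, on every graph and under all identifier and certificate assignments, all nodes reach stop within $c$ rounds, and in every round every node makes at most $q(n)$ computation steps, $n$ being the total length of its receiving- and internal-tape contents at the beginning of the round. $\mathrm{NLP}$ is the class of graph properties $P$ for which there exist a local-polynomial machine $M$, constants $r_{\mathrm{id}},r\ge 1$ and a polynomial $p$ such that for every graph $G$ and every $r_{\mathrm{id}}$-locally unique identifier assignment $\mathrm{id}$ of $G$: $G\in P\iff\exists\kappa\,:\,M(G,\mathrm{id},\kappa)\equiv\mathrm{accept}$,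 $\kappa$ ranging over $(r,p)$-bounded certificate assignments of $(G,\mathrm{id})$. *)

From HB Require Import structures.
From mathcomp Require Import all_boot.
Set Implicit Arguments. Unset Strict Implicit. Unset Printing Implicit Defensive.

(* Vertices are 'I_n (every finite graph is isomorphic to such one).   *)
Record graph := Graph {
  gn : nat;
  gadj : rel 'I_gn;
  glab : 'I_gn -> seq bool;
  gn_pos : 0 < gn;
  gadj_sym : symmetric gadj;
  gadj_irr : irreflexive gadj;
  gconn : forall u v : 'I_gn, connect gadj u v }.

Fixpoint within (G : graph) (k : nat) (u v : 'I_(gn G)) : bool :=
  if k is k'.+1 then (u == v) || [exists w, @gadj G u w && within k' w v]
  else u == v.
Arguments within : clear implicits.

Definition three_colorable (G : graph) : Prop :=
  exists f : 'I_(gn G) -> 'I_3, forall u v, @gadj G u v -> f u != f v.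

Definition locally_unique (G : graph) (r : nat) (idf : 'I_(gn G) -> seq bool) :=
  forall u v : 'I_(gn G), u != v -> within G (2 * r) u v -> idf u != idf v.

Arguments locally_unique : clear implicits.

Fixpoint lexle (s t : seq bool) : bool :=
  match s, t with
  | [::], _ => true
  | _ :: _, [::] => false
  | a :: s', b :: t' => (~~ a && b) || ((a == b) && lexle s' t')
  end.

(* polynomials N -> N, given by their (natural) coefficient list, low degree first *)
Definition peval (p : seq nat) (x : nat) : nat := foldr (fun a acc => a + x * acc) 0 p.

Definition bounded (G : graph) (idf : 'I_(gn G) -> seq bool) (r : nat) (p : seq nat)
    (kap : 'I_(gn G) -> seq bool) : Prop :=
  forall u : 'I_(gn G),
    size (kap u) <= peval p (\sum_(v | within G r u v) (1 + size (@glab G v) + size (idf v))).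

Arguments bounded : clear implicits.

Inductive sym := SLend | SBlank | SSep | S0 | S1.

Definition sym_eqb (a b : sym) : bool :=
  match a, b with
  | SLend, SLend | SBlank, SBlank | SSep, SSep | S0, S0 | S1, S1 => true
  | _, _ => false
  end.
Lemma sym_eqP : Equality.axiom sym_eqb.
Proof. by case; case; constructor. Qed.
HB.instance Definition _ := hasDecEq.Build sym sym_eqP.

Inductive mv := ML | MS | MR.

(* three tapes: 1 = receiving, 2 = internal, 3 = sending *)
Record dtm := DTM {
  nQ : nat;
  q_start : 'I_nQ; q_pause : 'I_nQ; q_stop : 'I_nQ;
  delta : 'I_nQ -> sym -> sym -> sym -> 'I_nQ * (sym * sym * sym) * (mv * mv * mv);
  start_pause : q_start != q_pause;
  start_stop : q_start != q_stop;
  pause_stop : q_pause != q_stop }.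

(* A tape is represented by the seq of its cells 1,2,...; cell 0 always holds
   the left-end marker, cells beyond the seq hold blanks. *)
Definition read (s : seq sym) (h : nat) : sym :=
  if h is h'.+1 then nth SBlank s h' else SLend.
Definition write (s : seq sym) (h : nat) (x : sym) : seq sym :=
  if h is h'.+1 then set_nth SBlank s h' x else s.
Definition movep (m : mv) (h : nat) : nat :=
  match m with ML => h.-1 | MS => h | MR => h.+1 end.

Record cfg (M : dtm) := Cfg {
  cq : 'I_(nQ M); t1 : seq sym; t2 : seq sym; t3 : seq sym;
  h1 : nat; h2 : nat; h3 : nat }.

Definition halted (M : dtm) (q : 'I_(nQ M)) : bool := (q == q_pause M) || (q == q_stop M).

Definition step (M : dtm) (c : cfg M) : cfg M :=
  if halted (cq c) then c else
  let: (q', (a1, a2, a3), (m1, m2, m3)) :=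
     delta (cq c) (read (t1 c) (h1 c)) (read (t2 c) (h2 c)) (read (t3 c) (h3 c)) in
  @Cfg M q' (write (t1 c) (h1 c) a1) (write (t2 c) (h2 c) a2) (write (t3 c) (h3 c) a3)
        (movep m1 (h1 c)) (movep m2 (h2 c)) (movep m3 (h3 c)).

Definition sym_of_bit (b : bool) : sym := if b then S1 else S0.
Definition bits_of (s : seq sym) : seq bool :=
  pmap (fun x => match x with S0 => Some false | S1 => Some true | _ => None end) s.

Definition pieces (s : seq sym) : seq (seq sym) :=
  foldr (fun x acc =>
           if x is SSep then [::] :: acc
           else match acc with [::] => [:: [:: x]] | p :: ps => (x :: p) :: ps end)
        [:: [::]] s.
(* i-th (0-based) #-separated bit string on a tape (empty if none) *)
Definition message (i : nat) (s : seq sym) : seq bool := bits_of (nth [::] (pieces s) i).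

(* length of the content of a tape (up to the last non-blank cell) *)
Definition content_len (s : seq sym) : nat := size s - find (fun x => x != SBlank) (rev s).

Definition snbrs (G : graph) (idf : 'I_(gn G) -> seq bool) (u : 'I_(gn G)) :
    seq 'I_(gn G) :=
  sort (fun v w => lexle (idf v) (idf w)) [seq v <- enum 'I_(gn G) | @gadj G u v].

(* node state between rounds: internal tape, stopped?, sending tape *)
Record nst := NSt { nit : seq sym; nstop : bool; nsend : seq sym }.

Definition recv (G : graph) (idf : 'I_(gn G) -> seq bool) (S : 'I_(gn G) -> nst)
    (u : 'I_(gn G)) : seq sym :=
  flatten [seq map sym_of_bit (message (index u (snbrs idf v)) (nsend (S v))) ++ [:: SSep]
          | v <- snbrs idf u].

(* The boolean says whether
   every running node reached pause or stop within its fuel. *)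
Definition round (M : dtm) (G : graph) (idf : 'I_(gn G) -> seq bool) (fuel : nat -> nat)
    (S : 'I_(gn G) -> nst) : ('I_(gn G) -> nst) * bool :=
  let res u :=
    if nstop (S u) then (NSt (nit (S u)) true [::], true) else
    let r := recv idf S u in
    let c0 := @Cfg M (q_start M) r (nit (S u)) [::] 0 0 0 in
    let c := iter (fuel (content_len r + content_len (nit (S u)))) (@step M) c0 in
    (NSt (t2 c) (cq c == q_stop M) (t3 c), halted (cq c)) in
  (fun u => (res u).1, [forall u, (res u).2]).

Definition init_state (G : graph) (idf kap : 'I_(gn G) -> seq bool) (u : 'I_(gn G)) : nst :=
  NSt (map sym_of_bit (@glab G u) ++ SSep :: map sym_of_bit (idf u) ++
       SSep :: map sym_of_bit (kap u)) false [::].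

Fixpoint exec (M : dtm) (G : graph) (idf kap : 'I_(gn G) -> seq bool) (fuel : nat -> nat)
    (R : nat) : ('I_(gn G) -> nst) * bool :=
  if R is R'.+1 then
    let SO := exec M idf kap fuel R' in
    let SO' := round M idf fuel SO.1 in
    (SO'.1, SO.2 && SO'.2)
  else (init_state idf kap, true).

Definition all_stopped (G : graph) (S : 'I_(gn G) -> nst) : bool := [forall u, nstop (S u)].

Definition accepts (M : dtm) (G : graph) (idf kap : 'I_(gn G) -> seq bool) : Prop :=
  exists R K : nat,
    let SO := exec M idf kap (fun _ => K) R in
    [&& SO.2, all_stopped SO.1 & [forall u, bits_of (nit (SO.1 u)) == [:: true]]].

Arguments accepts : clear implicits.

Definition local_polynomial (M : dtm) : Prop :=
  exists (c : nat) (q : seq nat),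
    forall (G : graph) (idf kap : 'I_(gn G) -> seq bool),
      locally_unique G 1 idf ->
      let SO := exec M idf kap (peval q) c in SO.2 && all_stopped SO.1.

Definition NLP (P : graph -> Prop) : Prop :=
  exists M : dtm, local_polynomial M /\
  exists (rid r : nat) (p : seq nat), 1 <= rid /\ 1 <= r /\
    forall (G : graph) (idf : 'I_(gn G) -> seq bool),
      locally_unique G rid idf ->
      (P G <-> exists kap : 'I_(gn G) -> seq bool,
                 bounded G idf r p kap /\ accepts M G idf kap).

From mathcomp Require Import all_boot zify.
Set Implicit Arguments. Unset Strict Implicit. Unset Printing Implicit Defensive.

(* A nondeterministic local verifier cannot tell a graph from a covering of it:
   if pi : H -> G is a label-preserving covering map (a surjective graph
   homomorphism that is bijective from each neighbourhood of H onto the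
   corresponding neighbourhood of G), then pulling identifiers and certificates
   of G back along pi makes every node of H simulate exactly its image in G, so
   any accepted certificate of G yields an accepted, still bounded, certificate
   of H.

   We then instantiate it with squares of cycles: ring N is the cycle C_N with
   all chords of length 2.  Every proper 3-colouring of ring N is 3-periodic, so
   ring N is 3-colourable iff 3 divides N.  For n = 1 (mod 3) large compared to
   the identifier radius, ring (3n) triple-covers ring n; the pulled-back
   unary identifiers remain locally unique.  A verifier for NON-3-COLORABLE
   would accept ring n, hence also the 3-colourable ring (3n): contradiction. *)

Lemma snbrs_mem (G : graph) (idf : 'I_(gn G) -> seq bool) u v :
  (v \in snbrs idf u) = @gadj G u v.
Proof. by rewrite /snbrs mem_sort mem_filter mem_enum andbT. Qed.

Lemma index_map_in (T1 T2 : eqType) (f : T1 -> T2) (s : seq T1) x :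
  {in s &, injective f} -> x \in s -> index (f x) (map f s) = index x s.
Proof.
elim: s => //= y s IH inj; rewrite inE => /orP [/eqP ->|xs]; first by rewrite !eqxx.
have inj' : {in s &, injective f}.
  by move=> a b ha hb; apply: inj; rewrite inE ?ha ?hb orbT.
case: eqP => [fxy|]; last by case: eqP => [-> //|_ _]; rewrite IH.
have -> : x = y by apply: inj; rewrite ?inE ?xs ?eqxx ?orbT.
by rewrite eqxx.
Qed.

(* The lexicographic order on bit strings is a total order; this is what makes
   the neighbour order a total order once identifiers are injective. *)
Lemma lexle_total : total lexle.
Proof. by elim=> [|a s IH] [|b t] //=; case: a; case: b => //=; apply: IH. Qed.

Lemma lexle_trans : transitive lexle.
Proof.
elim=> [|b t IH] [|a s] [|c u] //=.
by case: a; case: b; case: c => //=; apply: IH.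
Qed.

Lemma lexle_anti : antisymmetric lexle.
Proof.
elim=> [|a s IH] [|b t] //=; case: a; case: b => //= /IH -> //.
Qed.

Lemma peval_mono p x y : x <= y -> peval p x <= peval p y.
Proof. by move=> hxy; elim: p => //= a p IH; rewrite leq_add2l leq_mul. Qed.

Lemma injective_locally_unique (G : graph) r (idf : 'I_(gn G) -> seq bool) :
  injective idf -> locally_unique G r idf.
Proof. by move=> inj u v neq _; apply: contra neq => /eqP /inj ->. Qed.

Record covering (G H : graph) (pi : 'I_(gn H) -> 'I_(gn G)) : Prop := Covering {
  cov_lab : forall j, @glab H j = @glab G (pi j);
  cov_hom : forall u v, @gadj H u v -> @gadj G (pi u) (pi v);
  cov_lift : forall j w, @gadj G (pi j) w -> exists2 v, @gadj H j v & pi v = w;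
  cov_loc_inj : forall j u v, @gadj H j u -> @gadj H j v -> pi u = pi v -> u = v;
  cov_surj : forall w, exists j, pi j = w }.
Arguments covering : clear implicits.

Section Covering.
Variables (G H : graph) (pi : 'I_(gn H) -> 'I_(gn G)) (pi_cov : covering G H pi).
Variables (idG kapG : 'I_(gn G) -> seq bool).
Hypothesis idG_inj : injective idG.

Let idH j := idG (pi j).
Let kapH j := kapG (pi j).

Lemma snbrs_cover j : map pi (snbrs idH j) = snbrs idG (pi j).
Proof.
rewrite /snbrs.
change (map pi (sort (relpre pi (fun v w => lexle (idG v) (idG w)))
   [seq v <- enum 'I_(gn H) | gadj j v]) =
   sort (fun v w => lexle (idG v) (idG w)) [seq v <- enum 'I_(gn G) | gadj (pi j) v]).
rewrite -sort_map; apply/perm_sortP.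
- by move=> v w; apply: lexle_total.
- by move=> v u w; apply: lexle_trans.
- by move=> v w /lexle_anti /idG_inj.
apply: uniq_perm.
- rewrite map_inj_in_uniq; first by rewrite filter_uniq ?enum_uniq.
  move=> u v; rewrite !mem_filter => /andP[hu _] /andP[hv _].
  exact: (cov_loc_inj pi_cov) hu hv.
- by rewrite filter_uniq ?enum_uniq.
move=> w; rewrite mem_filter mem_enum andbT; apply/mapP/idP.
- by case=> v; rewrite mem_filter mem_enum andbT => /(cov_hom pi_cov) h ->.
- by case/(cov_lift pi_cov)=> v hv <-; exists v; rewrite // mem_filter mem_enum andbT.
Qed.

Lemma recv_cover (SH : 'I_(gn H) -> nst) (SG : 'I_(gn G) -> nst) j :
  (forall j, SH j = SG (pi j)) -> recv idH SH j = recv idG SG (pi j).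
Proof.
move=> hS; rewrite /recv -snbrs_cover -map_comp; congr flatten.
apply/eq_in_map => v hv /=; rewrite hS -snbrs_cover index_map_in //.
- by move=> a b; rewrite !(snbrs_mem idH); apply: (cov_loc_inj pi_cov).
- by rewrite (snbrs_mem idH) gadj_sym -(snbrs_mem idH).
Qed.

(* Round by round, every node of H simulates its image in G, and H halts in
   time exactly when G does (this uses surjectivity). *)
Lemma exec_cover M fuel R :
  (forall j, (exec M idH kapH fuel R).1 j = (exec M idG kapG fuel R).1 (pi j)) /\
  (exec M idH kapH fuel R).2 = (exec M idG kapG fuel R).2.
Proof.
elim: R => [|R [IH1 IH2]] /=; first by split=> // j; rewrite /init_state (cov_lab pi_cov).
split; first by move=> j; rewrite /round /= (recv_cover j IH1) IH1.
rewrite IH2 /round /=; congr andb; apply/forallP/forallP => h x.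
- by have [j <-] := (cov_surj pi_cov) x; move: (h j); rewrite (recv_cover j IH1) IH1.
- by rewrite (recv_cover x IH1) IH1.
Qed.

Lemma accepts_cover M : accepts M G idG kapG -> accepts M H idH kapH.
Proof.
case=> R [K h]; exists R, K; move: h.
have [same_state same_halt] := exec_cover M (fun _ => K) R.
rewrite /= same_halt /all_stopped => /and3P [halt stopped ones]; rewrite halt /=.
by apply/andP; split; apply/forallP => j; rewrite same_state;
  [apply: (forallP stopped) | apply: (forallP ones)].
Qed.

Lemma within_lift r j w : within G r (pi j) w -> exists2 v, within H r j v & pi v = w.
Proof.
elim: r j => [|r IH] j /=; first by move=> /eqP <-; exists j.
case/orP => [/eqP <-|/existsP [w' /andP [hw' hw]]]; first by exists j; rewrite ?eqxx.
have [v hv vw'] := cov_lift pi_cov hw'; subst w'; have [x hx <-] := IH v hw.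
by exists x => //; apply/orP; right; apply/existsP; exists v; rewrite hv hx.
Qed.

(* Since balls of H map onto balls of G, the size measure bounding certificates
   can only grow, so pulled-back certificates stay bounded. *)
Lemma bounded_cover r p : bounded G idG r p kapG -> bounded H idH r p kapH.
Proof.
move=> hb u; apply: leq_trans (hb (pi u)) _; apply: peval_mono.
rewrite (partition_big pi predT) //=.
rewrite [X in _ <= X](bigID (fun w => within G r (pi u) w)) /=.
apply: leq_trans (leq_addr _ _); apply: leq_sum => w hw.
have [v hv hvw] := within_lift hw.
rewrite (bigD1 v) /=; last by rewrite hv hvw eqxx.
by rewrite /idH (cov_lab pi_cov) hvw leq_addr.
Qed.

End Covering.

(* Adjacency in the square of the cycle on 0..N-1: circular distance 1 or 2. *)
Definition adjN (N u v : nat) : bool :=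
  [|| v == u + 1, v == u + 2, v + N == u + 1, v + N == u + 2,
      u == v + 1, u == v + 2, u + N == v + 1 | u + N == v + 2].

(* With three colours, a vertex adjacent to two vertices of a triangle repeats
   the colour of the third one. *)
Lemma three_colors a b c d : a < 3 -> b < 3 -> c < 3 -> d < 3 ->
  a != b -> a != c -> b != c -> b != d -> c != d -> d = a.
Proof.
by case: a => [|[|[|a]]] //; case: b => [|[|[|b]]] //; case: c => [|[|[|c]]] //;
  case: d => [|[|[|d]]].
Qed.

Section Ring.
Variables (N : nat) (hN : 2 < N).

Definition radj : rel 'I_N := fun u v => adjN N u v.

Lemma radj_sym : symmetric radj.
Proof. by move=> u v; rewrite /radj /adjN; apply/idP/idP; lia. Qed.

Lemma radj_irr : irreflexive radj.
Proof. by move=> u; rewrite /radj /adjN; apply/negbTE; lia. Qed.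

Lemma ring_pos : 0 < N. Proof. lia. Qed.

(* Every vertex is reached from 0 by steps of +1. *)
Lemma radj_conn u v : connect radj u v.
Proof.
pose o0 : 'I_N := Ordinal ring_pos.
have from0 m (x : 'I_N) : val x = m -> connect radj o0 x.
  elim: m x => [|m IH] x /= hx; first by have -> : x = o0 by apply: val_inj.
  have hm : m < N by have := ltn_ord x; lia.
  apply: connect_trans (IH (Ordinal hm) erefl) (connect1 _).
  by rewrite /radj /adjN /=; lia.
apply: connect_trans (_ : connect radj u o0) (from0 _ v erefl).
by rewrite (sym_connect_sym radj_sym) (from0 _ u erefl).
Qed.

Definition ring : graph :=
  @Graph N radj (fun _ => [::]) ring_pos radj_sym radj_irr radj_conn.

Section ProperColoring.
Variables (f : 'I_N -> 'I_3) (f_proper : forall u v, radj u v -> f u != f v).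

Let o0 : 'I_N := Ordinal ring_pos.
Let col (i : nat) : nat := val (f (insubd o0 i)).

Lemma col_lt3 i : col i < 3. Proof. exact: ltn_ord. Qed.

Lemma col_adj u v : u < N -> v < N -> adjN N u v -> col u != col v.
Proof.
move=> hu hv huv; have := @f_proper (insubd o0 u) (insubd o0 v).
rewrite /radj !val_insubd hu hv => /(_ huv).
by apply: contra_neq => /val_inj.
Qed.

(* Vertices i, i+1, i+2 form a triangle, and i+3 is adjacent to i+1 and i+2,
   so with three colours i+3 repeats the colour of i. *)
Lemma col_shift3 i : i + 3 < N -> col (i + 3) = col i.
Proof.
move=> hi; apply: (three_colors (b := col (i + 1)) (c := col (i + 2)));
  rewrite ?col_lt3 //; apply: col_adj; rewrite /adjN; lia.
Qed.

Lemma col_mod3 i : i < N -> col i = col (i %% 3).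
Proof.
have [k] := ubnP i; elim: k i => // k IH i ltik hi.
have [small|big] := ltnP i 3; first by rewrite modn_small.
have -> : i = i - 3 + 3 by lia.
rewrite col_shift3 ?modnDr; last by lia.
by apply: IH; lia.
Qed.

(* Closing the cycle: vertex N-1 is adjacent to 0 and to 1, so its residue
   mod 3 can be neither 0 nor 1, i.e. N = 0 (mod 3). *)
Lemma proper_coloring_dvd3 : 3 %| N.
Proof.
have hlast : N.-1 < N by lia.
have last_col := col_mod3 hlast.
have adj0 : col N.-1 != col 0 by apply: col_adj; rewrite /adjN; lia.
have adj1 : col N.-1 != col 1 by apply: col_adj; rewrite /adjN; lia.
case r: (N.-1 %% 3) => [|[|k]].
- by move: adj0; rewrite last_col r eqxx.
- by move: adj1; rewrite last_col r eqxx.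
- by apply/dvdnP; exists (N %/ 3); lia.
Qed.
End ProperColoring.

Lemma ring_colorable_iff : three_colorable ring <-> 3 %| N.
Proof.
split; first by case=> f; apply: proper_coloring_dvd3.
case/dvdnP=> k hk; exists (fun v => Ordinal (ltn_pmod v (isT : 0 < 3))) => u v.
have hu := ltn_ord u; have hv := ltn_ord v.
by rewrite /= /radj /adjN => h; apply/eqP => /(congr1 val) /=; lia.
Qed.
End Ring.

Definition circ_close (N d u v : nat) : bool :=
  [|| (u <= v + d) && (v <= u + d), u + N <= v + d | v + N <= u + d].

(* Each step in the square of the N-cycle moves circular distance at most 2. *)
Lemma within_ring_close N (hN : 2 < N) k (u v : 'I_N) :
  within (ring hN) k u v -> circ_close N (2 * k) u v.
Proof.
elim: k u => [|k IH] u /=; first by move=> /eqP ->; rewrite /circ_close !leq_addr.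
have hu : (u : nat) < N := ltn_ord u; have hv : (v : nat) < N := ltn_ord v.
case/orP => [/eqP ->|/existsP [w /andP [huw /IH]]]; first by rewrite /circ_close; lia.
by have hw : (w : nat) < N := ltn_ord w; move: huw; rewrite /= /radj /circ_close /adjN; lia.
Qed.

Lemma mod_cases3 n j : j < 3 * n ->
  [\/ j < n /\ j %% n = j, n <= j < 2 * n /\ j %% n = j - n
    | 2 * n <= j /\ j %% n = j - 2 * n].
Proof.
move=> hj; have [h1|h1] := ltnP j n; first by constructor 1; rewrite modn_small.
have [h2|h2] := ltnP j (2 * n).
- constructor 2; split; first by lia.
  have -> : j = j - n + n by lia.
  by rewrite modnDr modn_small; lia.
- constructor 3; split => //.
  have -> : j = 2 * n + (j - 2 * n) by lia.
  by rewrite modnMDl modn_small; lia.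
Qed.

Lemma mod_eq3 n v w : v < 3 * n -> w < n ->
  (v %% n = w <-> v = w \/ v = w + n \/ v = w + 2 * n).
Proof.
move=> hv hw; split; first by case: (mod_cases3 hv) => [[? ->]|[? ->]|[? ->]]; lia.
by case=> [->|[->|->]]; [idtac | rewrite modnDr | rewrite addnC modnMDl]; rewrite modn_small.
Qed.

(* Every neighbour of j mod n in ring n is the residue of a neighbour of j in
   ring (3n); n > 4 keeps the eight candidate neighbours distinct. *)
Lemma mod_lift3 n j w : 4 < n -> j < 3 * n -> w < n -> adjN n (j %% n) w ->
  exists v, [/\ v < 3 * n, adjN (3 * n) j v & v %% n = w].
Proof.
move=> hn hj hw hadj.
suff [v [hv hjv hvw]] : exists v, [/\ v < 3 * n, adjN (3 * n) j v &
    v = w \/ v = w + n \/ v = w + 2 * n].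
  by exists v; split => //; apply/mod_eq3.
move: hadj; case: (mod_cases3 hj) => [[? ->]|[? ->]|[? ->]]; rewrite /adjN.
all: move=> /orP[/eqP h|/orP[/eqP h|/orP[/eqP h|/orP[/eqP h|/orP[/eqP h|/orP[/eqP h|/orP[/eqP h|/eqP h]]]]]]].
all: first [ exists (j + 1); split; lia | exists (j + 2); split; lia
           | exists (j + 1 - 3 * n); split; lia | exists (j + 2 - 3 * n); split; lia
           | exists (j - 1); split; lia | exists (j - 2); split; lia
           | exists (j + 3 * n - 1); split; lia | exists (j + 3 * n - 2); split; lia ].
Qed.

Definition unary_id (N : nat) (w : 'I_N) : seq bool := nseq w true.

Lemma unary_id_inj N : injective (@unary_id N).
Proof. by move=> v w /(congr1 size); rewrite !size_nseq => /val_inj. Qed.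

Section TripleCover.
Variables (n : nat) (hn : 4 < n).

Lemma base_gt2 : 2 < n. Proof. lia. Qed.
Lemma cover_gt2 : 2 < 3 * n. Proof. lia. Qed.
Lemma base_pos : 0 < n. Proof. lia. Qed.

Definition base_ring : graph := ring base_gt2.
Definition cover_ring : graph := ring cover_gt2.

Definition cover_proj (j : 'I_(3 * n)) : 'I_n := Ordinal (ltn_pmod j base_pos).

Lemma cover_proj_hom (u v : 'I_(3 * n)) :
  @gadj cover_ring u v -> @gadj base_ring (cover_proj u) (cover_proj v).
Proof.
have hu := ltn_ord u; have hv := ltn_ord v; rewrite /= /radj /adjN /=.
by case: (mod_cases3 hu) => [[? ->]|[? ->]|[? ->]];
   case: (mod_cases3 hv) => [[? ->]|[? ->]|[? ->]]; lia.
Qed.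

Lemma cover_proj_surj (w : 'I_n) : exists j, cover_proj j = w.
Proof.
have hw : w < 3 * n by have := ltn_ord w; lia.
by exists (Ordinal hw); apply: val_inj; rewrite /= modn_small.
Qed.

Lemma cover_proj_loc_inj (j u v : 'I_(3 * n)) :
  @gadj cover_ring j u -> @gadj cover_ring j v -> cover_proj u = cover_proj v -> u = v.
Proof.
have hj := ltn_ord j; have hu := ltn_ord u; have hv := ltn_ord v.
move=> hju hjv /(congr1 val) /= e; apply: val_inj; move: hju hjv e.
rewrite /= /radj /adjN /=.
by case: (mod_cases3 hu) => [[? ->]|[? ->]|[? ->]];
   case: (mod_cases3 hv) => [[? ->]|[? ->]|[? ->]]; lia.
Qed.

Lemma cover_proj_lift (j : 'I_(3 * n)) (w : 'I_n) :
  @gadj base_ring (cover_proj j) w -> exists2 v, @gadj cover_ring j v & cover_proj v = w.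
Proof.
move=> hadj; have [v [hv hjv hvw]] := mod_lift3 hn (ltn_ord j) (ltn_ord w) hadj.
by exists (Ordinal hv) => //; apply: val_inj.
Qed.

Lemma cover_proj_covering : covering base_ring cover_ring cover_proj.
Proof.
split; [by [] | exact: cover_proj_hom | exact: cover_proj_lift
       | exact: cover_proj_loc_inj | exact: cover_proj_surj].
Qed.

Lemma cover_colorable : three_colorable cover_ring.
Proof. by apply/ring_colorable_iff; apply: dvdn_mulr. Qed.

Lemma base_not_colorable : ~ 3 %| n -> ~ three_colorable base_ring.
Proof. by move=> ndvd /ring_colorable_iff. Qed.

(* Distinct vertices of ring (3n) at distance at most 2r are at circular
   distance at most 4r < n, hence have distinct residues mod n. *)
Lemma cover_proj_ball_inj r (u v : 'I_(3 * n)) : 4 * r < n ->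
  within cover_ring (2 * r) u v -> cover_proj u = cover_proj v -> u = v.
Proof.
move=> hr /(@within_ring_close (3 * n) cover_gt2) close /(congr1 val) /= e.
apply: val_inj; move: close e.
have hu := ltn_ord u; have hv := ltn_ord v; rewrite /circ_close /=.
by case: (mod_cases3 hu) => [[? ->]|[? ->]|[? ->]];
   case: (mod_cases3 hv) => [[? ->]|[? ->]|[? ->]]; lia.
Qed.

Lemma cover_locally_unique r : 4 * r < n ->
  locally_unique cover_ring r (fun j => unary_id (cover_proj j)).
Proof.
move=> hr u v neq /(cover_proj_ball_inj hr) inj.
by apply: contra neq => /eqP /unary_id_inj /inj ->.
Qed.

End TripleCover.

Theorem corollary9p5 : ~ NLP (fun G : graph => ~ three_colorable G).
Proof.
case=> M [_ [rid [r [p [_ [_ verifier]]]]]].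
pose n := (3 * (2 * rid + 2)).+1.
have hn : 4 < n by rewrite /n; lia.
have n3 : ~ 3 %| n by rewrite /n; lia.
have base_ids := @injective_locally_unique (base_ring hn) rid _ (@unary_id_inj n).
have [accept_base _] := verifier (base_ring hn) _ base_ids.
have [kap [kap_bounded kap_accepted]] := accept_base (base_not_colorable n3).
have cover_ids : locally_unique (cover_ring hn) rid (fun j => unary_id (cover_proj hn j)).
  by apply: cover_locally_unique; rewrite /n; lia.
have [_ reject_cover] := verifier (cover_ring hn) _ cover_ids.
apply: reject_cover (cover_colorable hn); exists (fun j => kap (cover_proj hn j)); split.
- exact: (bounded_cover (cover_proj_covering hn) kap_bounded).
- exact: (accepts_cover (cover_proj_covering hn) (@unary_id_inj n) kap_accepted).
Qed.
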